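(* Let $V\subseteq\mathbb{R}^n$ be convex, $F\colon V\to\mathbb{R}^n$ globally Lipschitz, and $\tilde F\colon V^N\to\mathbb{R}^{nN}$, $\tilde F(u)=(F(u_1)^T,\dots,F(u_N)^T)^T$. For $1\le p\le\infty$ and a positive diagonal $Q$, $M^+_{p,Q}[\tilde F]\le M_{p,Q}[F]$.
   Context: On $\mathbb{R}^{nN}$, $\|u\|_{p,Q}=\big\|(\|Qu_1\|_p,\dots,\|Qu_N\|_p)^T\big\|_p$ and $M^+_{p,Q}[\tilde F]=\sup_{u\neq v\in V^N}\lim_{h\to0^+}\frac1h\left(\frac{\|u-v+h(\tilde F(u)-\tilde F(v))\|_{p,Q}}{\|u-v\|_{p,Q}}-1\right)$. On $\mathbb{R}^n$, $\|x\|_{p,Q}=\|Qx\|_p$ and $M_{p,Q}[F]=\lim_{h\to0^+}\sup_{x\neq y\in V}\frac1h\left(\frac{\|x-y+h(F(x)-F(y))\|_{p,Q}}{\|x-y\|_{p,Q}}-1\right)$. *)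

From HB Require Import structures.
From mathcomp Require Import all_boot all_order all_algebra.
From mathcomp Require Import all_classical all_reals all_analysis.
Set Implicit Arguments. Unset Strict Implicit. Unset Printing Implicit Defensive.
Import Order.TTheory GRing.Theory Num.Theory.
Import numFieldNormedType.Exports.
Local Open Scope classical_set_scope.
Local Open Scope ring_scope.

Definition pnorm {R : realType} (p : \bar R) (k : nat) (x : 'I_k -> R) : R :=
  match p with
  | r%:E => (\sum_(i < k) `|x i| `^ r) `^ r^-1
  | +oo%E => \big[Num.max/0]_(i < k) `|x i|
  | -oo%E => 0
  end.

Definition wnorm {R : realType} (p : \bar R) (n : nat) (Q : 'M[R]_n)
  (x : 'cV[R]_n) : R :=
  pnorm p (fun i => (Q *m x) i 0).

(* R^{nN} is represented by n x N matrices: the i-th block u_i is column i.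
   ||u||_{p,Q} = || (||Q u_1||_p, ..., ||Q u_N||_p)^T ||_p. *)
Definition bnorm {R : realType} (p : \bar R) (n N : nat) (Q : 'M[R]_n)
  (u : 'M[R]_(n, N)) : R :=
  pnorm p (fun i : 'I_N => wnorm p Q (col i u)).

Definition Ftilde {R : realType} (n N : nat) (F : 'cV[R]_n -> 'cV[R]_n)
  (u : 'M[R]_(n, N)) : 'M[R]_(n, N) :=
  \matrix_(j < n, i < N) F (col i u) j 0.

Definition Mlog {R : realType} (p : \bar R) (n : nat) (Q : 'M[R]_n)
  (V : set 'cV[R]_n) (F : 'cV[R]_n -> 'cV[R]_n) : \bar R :=
  lim ((fun h : R =>
          ereal_sup [set e | exists x y, [/\ V x, V y, x <> y &
            e = (h^-1 * (wnorm p Q (x - y + h *: (F x - F y)) / wnorm p Q (x - y)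
                          - 1))%:E]]) @ 0^'+).

Definition Mplus {R : realType} (p : \bar R) (n N : nat) (Q : 'M[R]_n)
  (V : set 'cV[R]_n) (F : 'cV[R]_n -> 'cV[R]_n) : \bar R :=
  ereal_sup [set e | exists u v : 'M[R]_(n, N),
    [/\ (forall i, V (col i u)), (forall i, V (col i v)), u <> v &
     e = lim ((fun h : R =>
       (h^-1 * (bnorm p Q (u - v + h *: (Ftilde F u - Ftilde F v)) / bnorm p Q (u - v)
                 - 1))%:E) @ 0^'+)]].

Definition convex_subset {R : realType} (n : nat) (V : set 'cV[R]_n) : Prop :=
  forall x y (t : R), V x -> V y -> 0 <= t <= 1 -> V (t *: x + (1 - t) *: y).

(* globally Lipschitz on V (w.r.t. the max norm; all norms on R^n are equivalent) *)
Definition glob_lipschitz_on {R : realType} (n : nat) (V : set 'cV[R]_n)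
  (F : 'cV[R]_n -> 'cV[R]_n) : Prop :=
  exists L : R, forall x y, V x -> V y -> `|F x - F y| <= L * `|x - y|.

From HB Require Import structures.
From mathcomp Require Import all_boot all_order all_algebra.
From mathcomp Require Import all_classical all_reals all_analysis.
From mathcomp Require Import ring lra.
Import Order.TTheory GRing.Theory Num.Theory.
Local Open Scope classical_set_scope.
Local Open Scope ring_scope.

(* For a sublinear g, the difference quotient
   h |-> (g (a + h b) / g a - 1) / h is nondecreasing on (0, +oo) by convexity
   of g, so both sides of the inequality are limits of monotone functions.
   For fixed h > 0, if s bounds the quotient of every pair x <> y of V, then
   each block satisfies
   ||u_i - v_i + h (F u_i - F v_i)||_{p,Q} <= (1 + h s) ||u_i - v_i||_{p,Q},
   and the outer p-norm, being monotone and positively homogeneous, carries this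
   bound over to the stacked vector; let h -> 0+. *)

Section pnorm.
Context {R : realType}.

(* Padding by zeros turns a finite vector into a sequence, so that Minkowski's
   inequality for the counting measure applies. *)
Definition zero_ext {k : nat} (x : 'I_k -> R) (m : nat) : R := oapp x 0 (insub m).

Lemma Lnorm_counting_zero_ext (r : R) k (x : 'I_k -> R) : 0 < r ->
  Lnorm (@counting _ R) r%:E (EFin \o zero_ext x) =
  ((\sum_(i < k) `|x i| `^ r) `^ r^-1)%:E.
Proof.
move=> r0; rewrite Lnorm_counting//.
rewrite (nneseries_split 0 k); last by move=> m _; rewrite poweR_ge0.
rewrite add0n eseries0 ?adde0; last first.
  move=> m km _ /=; rewrite /zero_ext insubN ?normr0 ?powR0 ?gt_eqF//.
  by rewrite -leqNgt.
rewrite big_mkord (eq_bigr (fun i : 'I_k => (`|x i| `^ r)%:E)); last first.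
  move=> i _; rewrite /= /zero_ext insubT //= => ?.
  by congr (`| x _ | `^ r)%:E; apply: val_inj.
by rewrite sumEFin poweR_EFin.
Qed.

Lemma minkowski_sum (r : R) k (x y : 'I_k -> R) : 1 <= r ->
  (\sum_(i < k) `|x i + y i| `^ r) `^ r^-1 <=
  (\sum_(i < k) `|x i| `^ r) `^ r^-1 + (\sum_(i < k) `|y i| `^ r) `^ r^-1.
Proof.
move=> r1; have r0 : 0 < r by apply: lt_le_trans r1.
have mx : measurable_fun setT (zero_ext x) by [].
have my : measurable_fun setT (zero_ext y) by [].
have := minkowski_EFin (@counting _ R) mx my r1.
have -> : (zero_ext x \+ zero_ext y)%R = zero_ext (fun i => x i + y i).
  apply/funext => m; rewrite /zero_ext /=; case: insubP => [i _ _|_] //=.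
  by rewrite addr0.
by rewrite !Lnorm_counting_zero_ext// -EFinD lee_fin.
Qed.

Context {p : \bar R} (p1 : (1 <= p)%E).

Lemma pnorm_ge0 {k : nat} (x : 'I_k -> R) : 0 <= pnorm p x.
Proof.
case: p p1 => [r||] //= _; first exact: powR_ge0.
by elim/big_ind: _ => // a b a0 b0; rewrite le_max a0.
Qed.

Lemma le_pnorm {k : nat} (x y : 'I_k -> R) :
  (forall i, `|x i| <= `|y i|) -> pnorm p x <= pnorm p y.
Proof.
case: p p1 => [r||] //=; rewrite ?lee_fin => r1 xy.
- have r0 : 0 < r by apply: lt_le_trans r1.
  apply: ge0_ler_powR; first by rewrite invr_ge0 ltW.
  - by rewrite nnegrE; apply: sumr_ge0 => *; exact: powR_ge0.
  - by rewrite nnegrE; apply: sumr_ge0 => *; exact: powR_ge0.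
  apply: ler_sum => i _; apply: ge0_ler_powR; rewrite ?nnegrE//; exact: ltW.
- elim/big_ind2: _ => // a b c d ab cd.
  rewrite ge_max !le_max ab cd orbT /=.
  by case: (leP b d) => bd; rewrite ?orbT //= (le_trans cd) ?ltW.
Qed.

Lemma ler_pnormD {k : nat} (x y : 'I_k -> R) :
  pnorm p (fun i => x i + y i) <= pnorm p x + pnorm p y.
Proof.
have := pnorm_ge0 x; have := pnorm_ge0 y.
case: p p1 => [r||] //=; rewrite ?lee_fin => r1 y0 x0.
- exact: minkowski_sum.
- apply: bigmax_le; first exact: addr_ge0.
  move=> i _; apply: le_trans (ler_normD _ _) _.
  by apply: lerD; apply: le_bigmax.
Qed.

Lemma ler_pnormZ {k : nat} (c : R) (x : 'I_k -> R) : 0 <= c ->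
  pnorm p (fun i => c * x i) <= c * pnorm p x.
Proof.
have := pnorm_ge0 x.
case: p p1 => [r||] //=; rewrite ?lee_fin => r1 x0 c0.
- have r0 : 0 < r by apply: lt_le_trans r1.
  under eq_bigr do rewrite normrM powRM// ger0_norm//.
  rewrite -mulr_sumr powRM ?powR_ge0 ?sumr_ge0// => *; rewrite ?powR_ge0//.
  by rewrite -powRrM mulfV ?gt_eqF// powRr1.
- apply: bigmax_le; first exact: mulr_ge0.
  move=> i _; rewrite normrM ger0_norm//; apply: ler_wpM2l => //.
  exact: le_bigmax.
Qed.

Lemma pnorm_eq0 {k : nat} (x : 'I_k -> R) : pnorm p x = 0 -> forall i, x i = 0.
Proof.
case: p p1 => [r||] //=; rewrite ?lee_fin => r1.
- have r0 : 0 < r by apply: lt_le_trans r1.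
  move=> /powR_eq0_eq0 /eqP; rewrite psumr_eq0 => [/allP x0 i|i _]; last first.
    exact: powR_ge0.
  have := x0 i (mem_index_enum _); rewrite implyTb => /eqP/powR_eq0_eq0/eqP.
  by rewrite normr_eq0 => /eqP.
- move=> x0 i; apply/eqP; rewrite -normr_eq0 eq_le normr_ge0 andbT -x0.
  exact: le_bigmax.
Qed.

End pnorm.

Section difference_quotient.
Context {R : realType} {V : lmodType R} (g : V -> R).

Definition diff_quot (a b : V) (h : R) : R := h^-1 * (g (a + h *: b) / g a - 1).

Lemma diff_quot_le a b h s : 0 < h -> 0 < g a ->
  (diff_quot a b h <= s) = (g (a + h *: b) <= (1 + h * s) * g a).
Proof.
move=> h0 ga0; rewrite /diff_quot.
have -> : h^-1 * (g (a + h *: b) / g a - 1) = (g (a + h *: b) - g a) / (h * g a).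
  by field; rewrite !gt_eqF.
rewrite ler_pdivrMr ?mulr_gt0//.
by apply/idP/idP => ?; lra.
Qed.

Hypotheses (gD : forall u w, g (u + w) <= g u + g w)
  (gZ : forall (c : R) u, 0 <= c -> g (c *: u) <= c * g u).

Lemma diff_quot_nondecreasing a b h1 h2 : 0 < g a -> 0 < h1 -> h1 <= h2 ->
  diff_quot a b h1 <= diff_quot a b h2.
Proof.
move=> ga0 h10 h12; have h20 : 0 < h2 by apply: lt_le_trans h12.
set t := h1 / h2.
have t0 : 0 <= t by rewrite divr_ge0 ?ltW.
have t1 : 0 <= 1 - t by rewrite subr_ge0 ler_pdivrMr// mul1r.
have convex_comb : a + h1 *: b = (1 - t) *: a + t *: (a + h2 *: b).
  by rewrite scalerDr scalerA /t mulfVK ?gt_eqF// addrA -scalerDl subrK scale1r.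
have g_convex : g (a + h1 *: b) <= (1 - t) * g a + t * g (a + h2 *: b).
  by rewrite convex_comb; apply: le_trans (gD _ _) _; apply: lerD; exact: gZ.
rewrite /diff_quot -subr_ge0.
have -> : h2^-1 * (g (a + h2 *: b) / g a - 1) - h1^-1 * (g (a + h1 *: b) / g a - 1)
    = (t * (g (a + h2 *: b) - g a) - (g (a + h1 *: b) - g a)) / (h1 * g a).
  by rewrite /t; field; rewrite !gt_eqF.
by apply: divr_ge0; [rewrite subr_ge0; lra | rewrite ltW ?mulr_gt0].
Qed.

End difference_quotient.

Lemma nondecreasing_pos_cvg {R : realType} (f : R -> \bar R) :
  (forall h1 h2, 0 < h1 -> h1 <= h2 -> (f h1 <= f h2)%E) -> cvg (f @ 0^'+).
Proof.
move=> ndf; apply: nondecreasing_at_right_is_cvge; apply: nearW => x.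
by move=> h1 h2; rewrite !in_itv /= => /andP[h10 _] _; exact: ndf.
Qed.

Lemma diff_quot_cvg {R : realType} {V : lmodType R} {g : V -> R} {a : V} (b : V) :
  0 < g a -> (forall u w, g (u + w) <= g u + g w) ->
  (forall (c : R) u, 0 <= c -> g (c *: u) <= c * g u) ->
  cvg ((fun h => (diff_quot g a b h)%:E) @ 0^'+).
Proof.
move=> ga0 gD gZ; apply: nondecreasing_pos_cvg => h1 h2 h10 h12.
by rewrite lee_fin; exact: diff_quot_nondecreasing.
Qed.

Section weighted_norms.
Context {R : realType} {p : \bar R} {n : nat} {Q : 'M[R]_n}.
Hypotheses (p1 : (1 <= p)%E) (Qdiag : is_diag_mx Q) (Qpos : forall i, 0 < Q i i).

Lemma wnorm_ge0 x : 0 <= wnorm p Q x.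
Proof. exact: pnorm_ge0. Qed.

Lemma ler_wnormD x y : wnorm p Q (x + y) <= wnorm p Q x + wnorm p Q y.
Proof.
rewrite /wnorm; under eq_fun do rewrite mulmxDr mxE.
exact: ler_pnormD.
Qed.

Lemma ler_wnormZ (c : R) x : 0 <= c -> wnorm p Q (c *: x) <= c * wnorm p Q x.
Proof.
move=> c0; rewrite /wnorm; under eq_fun do rewrite -scalemxAr mxE.
exact: ler_pnormZ.
Qed.

Lemma wnorm0 : wnorm p Q 0 = 0.
Proof.
apply/le_anti; rewrite wnorm_ge0 andbT.
by have := ler_wnormZ 0 0 (lexx 0); rewrite scaler0 mul0r.
Qed.

Lemma wnorm_eq0 x : wnorm p Q x = 0 -> x = 0.
Proof.
move=> /(pnorm_eq0 p1) Qx0; apply/matrixP => i j; rewrite ord1 mxE.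
move: (Qx0 i); case/diag_mxP: Qdiag => d Qd.
move: (Qpos i); rewrite Qd mul_diag_mx !mxE eqxx mulr1n => d0 /eqP.
by rewrite mulf_eq0 (gt_eqF d0) => /eqP.
Qed.

Lemma wnorm_gt0 x : x != 0 -> 0 < wnorm p Q x.
Proof.
by move=> x0; rewrite lt_def wnorm_ge0 andbT; apply: contra_neq x0; exact: wnorm_eq0.
Qed.

Lemma bnorm_ge0 N (u : 'M[R]_(n, N)) : 0 <= bnorm p Q u.
Proof. exact: pnorm_ge0. Qed.

Lemma bnorm_le_cols N (c : R) (u w : 'M[R]_(n, N)) : 0 <= c ->
  (forall i, wnorm p Q (col i w) <= c * wnorm p Q (col i u)) ->
  bnorm p Q w <= c * bnorm p Q u.
Proof.
move=> c0 wu; apply: le_trans (ler_pnormZ p1 _ _ c0); apply: le_pnorm => // i.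
by rewrite !ger0_norm ?mulr_ge0 ?wnorm_ge0.
Qed.

Lemma ler_bnormD N (u w : 'M[R]_(n, N)) :
  bnorm p Q (u + w) <= bnorm p Q u + bnorm p Q w.
Proof.
apply: le_trans (ler_pnormD p1 _ _); apply: le_pnorm => // i.
by rewrite !ger0_norm ?addr_ge0 ?wnorm_ge0// linearD; exact: ler_wnormD.
Qed.

Lemma ler_bnormZ N (c : R) (u : 'M[R]_(n, N)) : 0 <= c ->
  bnorm p Q (c *: u) <= c * bnorm p Q u.
Proof.
by move=> c0; apply: bnorm_le_cols => // i; rewrite linearZ; exact: ler_wnormZ.
Qed.

Lemma bnorm_gt0 N (u : 'M[R]_(n, N)) : u != 0 -> 0 < bnorm p Q u.
Proof.
move=> u0; rewrite lt_def bnorm_ge0 andbT; apply: contra_neq u0.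
move=> /(pnorm_eq0 p1) ucol0; apply/matrixP => j i.
by have /wnorm_eq0/matrixP/(_ j 0) := ucol0 i; rewrite !mxE.
Qed.

End weighted_norms.

Lemma exists_col_neq {R : eqType} {m N : nat} {u v : 'M[R]_(m, N)} :
  u != v -> exists i, col i u != col i v.
Proof.
move=> uv; apply/existsP; apply: contraNT uv; rewrite negb_exists => /forallP uv.
by apply/eqP/matrixP => j i; have /negbNE/eqP/matrixP/(_ j 0) := uv i; rewrite !mxE.
Qed.

Lemma col_Ftilde_step {R : realType} n N (F : 'cV[R]_n -> 'cV[R]_n)
    (u v : 'M[R]_(n, N)) (h : R) i :
  col i (u - v + h *: (Ftilde F u - Ftilde F v)) =
  col i u - col i v + h *: (F (col i u) - F (col i v)).
Proof. by apply/matrixP => j k; rewrite !mxE ord1. Qed.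

Definition Mlog_quot {R : realType} (p : \bar R) {n : nat} (Q : 'M[R]_n)
    (V : set 'cV[R]_n) (F : 'cV[R]_n -> 'cV[R]_n) (h : R) : \bar R :=
  ereal_sup [set e | exists x y, [/\ V x, V y, x <> y &
    e = (diff_quot (wnorm p Q) (x - y) (F x - F y) h)%:E]].

Section logarithmic_norms.
Context {R : realType} (p : \bar R) (n : nat) (Q : 'M[R]_n).
Context (V : set 'cV[R]_n) (F : 'cV[R]_n -> 'cV[R]_n).
Hypotheses (p1 : (1 <= p)%E) (Qdiag : is_diag_mx Q) (Qpos : forall i, 0 < Q i i).

Lemma Mlog_quot_ub {x y} h : V x -> V y -> x <> y ->
  ((diff_quot (wnorm p Q) (x - y) (F x - F y) h)%:E <= Mlog_quot p Q V F h)%E.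
Proof. by move=> Vx Vy xy; apply: ereal_sup_ubound; exists x, y. Qed.

Lemma cvg_Mlog_quot : cvg (Mlog_quot p Q V F @ 0^'+).
Proof.
apply: nondecreasing_pos_cvg => h1 h2 h10 h12.
apply: ge_ereal_sup => _ [x [y [Vx Vy xy ->]]].
apply: le_trans _ (Mlog_quot_ub h2 Vx Vy xy); rewrite lee_fin.
apply: diff_quot_nondecreasing => //; [exact: ler_wnormD | exact: ler_wnormZ |].
by apply: wnorm_gt0 => //; rewrite subr_eq0; apply/eqP.
Qed.

Lemma block_quot_le_Mlog_quot N (u v : 'M[R]_(n, N)) h : 0 < h ->
  (forall i, V (col i u)) -> (forall i, V (col i v)) -> u != v ->
  ((diff_quot (bnorm p Q) (u - v) (Ftilde F u - Ftilde F v) h)%:E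
     <= Mlog_quot p Q V F h)%E.
Proof.
move=> h0 Vu Vv uv; have [i0 ui0] := exists_col_neq uv.
have col_gt0 i : col i u != col i v -> 0 < wnorm p Q (col i (u - v)).
  by move=> ui; rewrite linearB; apply: wnorm_gt0; rewrite // subr_eq0.
have quot_ub i : col i u != col i v ->
    ((diff_quot (wnorm p Q) (col i u - col i v) (F (col i u) - F (col i v)) h)%:E
      <= Mlog_quot p Q V F h)%E.
  by move=> /eqP; exact: Mlog_quot_ub.
case: (Mlog_quot p Q V F h) quot_ub => [s||] quot_ub; last 2 first.
- by rewrite leey.
- by have := quot_ub i0 ui0; rewrite leeNy_eq.
have col_le i : wnorm p Q (col i (u - v + h *: (Ftilde F u - Ftilde F v)))
    <= (1 + h * s) * wnorm p Q (col i (u - v)).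
  rewrite col_Ftilde_step [col i (u - v)]linearB /=.
  have [->|ui] := eqVneq (col i u) (col i v).
    by rewrite !subrr scaler0 addr0 wnorm0 ?mulr0.
  have := quot_ub i ui; rewrite lee_fin diff_quot_le //.
  by have := col_gt0 i ui; rewrite linearB.
have c0 : 0 <= 1 + h * s.
  rewrite -(pmulr_lge0 _ (col_gt0 _ ui0)); apply: le_trans _ (col_le i0).
  exact: wnorm_ge0.
have uv0 : 0 < bnorm p Q (u - v) by apply: bnorm_gt0; rewrite // subr_eq0.
by rewrite lee_fin diff_quot_le //; exact: bnorm_le_cols.
Qed.

End logarithmic_norms.

Theorem lemma11 (R : realType) (n N : nat) (V : set 'cV[R]_n)
  (F : 'cV[R]_n -> 'cV[R]_n) (p : \bar R) (Q : 'M[R]_n) :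
  convex_subset V -> glob_lipschitz_on V F ->
  (1 <= p)%E ->
  is_diag_mx Q -> (forall i, 0 < Q i i) ->
  (@Mplus R p n N Q V F <= Mlog p Q V F)%E.
Proof.
move=> _ _ p1 Qdiag Qpos.
apply: ge_ereal_sup => _ [u [v [Vu Vv /eqP uv ->]]].
have uv0 : 0 < bnorm p Q (u - v) by apply: bnorm_gt0; rewrite // subr_eq0.
change (Mlog p Q V F) with (lim (Mlog_quot p Q V F @ 0^'+)).
apply: (@lee_lim R^o (0^'+) _ R).
- apply: (diff_quot_cvg _ uv0); [exact: ler_bnormD | exact: ler_bnormZ].
- exact: cvg_Mlog_quot.
- by near=> h; apply: block_quot_le_Mlog_quot.
Unshelve. all: by end_near.
Qed.
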